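(* Under the setting, assumptions (A1)–(A2) and the algorithm PDAc-L described in the context, fix any $(x^\star,y^\star)\in\Omega$, let $J(x,y)=\mathcal L(x,y^\star)-\mathcal L(x^\star,y)$ and for $n\ge1$ define $$a_n=\frac{\psi}{\psi-1}\|z_{n+1}-x^\star\|^2+\frac1\beta\|y_{n-1}-y^\star\|^2+\omega\delta_{n-1}\|x_n-x_{n-1}\|^2,$$ $$b_n=-\frac{\tau_n\tau_{n-1}}{\xi}\|\theta_n\|^2+\frac1\beta\|y_n-y_{n-1}\|^2+\omega\delta_{n-1}\|x_n-x_{n-1}\|^2-2\tau_n\Phi_n^y.$$ Then for all $n\ge1$, $a_{n+1}+2\tau_nJ(x_n,y_n)\le a_n-b_n$.
   Context: Let $f:\mathbb{R}^p\to(-\infty,+\infty]$ and $g:\mathbb{R}^q\to(-\infty,+\infty]$ be proper closed convex functions; $f^*(y)=\sup_u\{\langle y,u\rangle-f(u)\}$ is the Fenchel conjugate, $\mathrm{dom}(h)=\{x:h(x)<+\infty\}$, and for $\lambda>0$, $\mathrm{Prox}_{\lambda h}(x)=\arg\min_u\{h(u)+\frac{1}{2\lambda}\|u-x\|^2\}$. Let $\Phi:\mathrm{dom}(g)\times\mathrm{dom}(f^* )\to\mathbb{R}$ be continuous and $\mathcal L(x,y)=g(x)+\Phi(x,y)-f^*(y)$. Let $\Omega$ be the set of $(x^\star,y^\star)\in\mathrm{dom}(g)\times\mathrm{dom}(f^* )$ with $-\nabla_x\Phi(x^\star,y^\star)\in\partial g(x^\star)$ and $\nabla_y\Phi(x^\star,y^\star)\in\partial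 f^*(y^\star)$. Assume: (A1) $\Omega\neq\emptyset$, $\mathrm{dom}(g)\times\mathrm{dom}(f^* )\subseteq\mathrm{dom}(\Phi)$, and $\mathcal L(x^\star,y^\star)$ is finite; (A2) for each $y\in\mathrm{dom}(f^* )$, $\Phi(\cdot,y)$ is convex and differentiable, for each $x\in\mathrm{dom}(g)$, $\Phi(x,\cdot)$ is concave and differentiable, and for all bounded $\mathcal X\subset\mathbb R^q$, $\mathcal Y\subset\mathbb R^p$ there exist $L_{yy},L_{xx}\ge 0$, $L_{xy}>0$ with $\|\nabla_y\Phi(x,y)-\nabla_y\Phi(x,\tilde y)\|\le L_{yy}\|y-\tilde y\|$ and $\|\nabla_x\Phi(x,y)-\nabla_x\Phi(\tilde x,\tilde y)\|\le L_{xx}\|x-\tilde x\|+L_{xy}\|y-\tilde y\|$ for all $x,\tilde x\in\mathcal X\cap\mathrm{dom}(g)$, $y,\tilde y\in\mathcal Y\cap\mathrm{dom}(f^* )$. Algorithm PDAc-L: choose $\psi\in(1,1+\sqrt3)$, $\xi>0$, $\varphi>1$ with $\omega:=2\psi-\xi-\frac{\psi^3\varphi}{1+\psi}>0$, $\tau_{\max}>0$, $\nu\in(0,1)$, $\mu\in(0,1)$, $\eta\in[0,1)$, an integer $M\ge1$, $\beta>0$, $x_0\in\mathrm{dom}(g)$, $y_0\in\mathrm{dom}(f^* )$, $\tau_0\in(0,\tau_{\max}]$; set $z_0=x_0$, $\delta_0=1$. For $n=1,2,\dots$: (1) $z_n=\frac{\psi-1}{\psi}x_{n-1}+\frac1\psi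 z_{n-1}$ and $x_n=\mathrm{Prox}_{\tau_{n-1}g}(z_n-\tau_{n-1}\nabla_x\Phi(x_{n-1},y_{n-1}))$. (2) Let $\tau=\min\{\varphi\tau_{n-1},\tau_{\max}\}$; set $\tau_n=\tau\mu^i$ and $y_n=\mathrm{Prox}_{\beta\tau_n f^*}(y_{n-1}+\beta\tau_n\nabla_y\Phi(x_n,y_{n-1}))$, where $i$ is the smallest nonnegative integer such that $\frac{\tau_n\tau_{n-1}}{\xi}\|\theta_n\|^2+2\tau_n\Phi_n^y\le\nu r_n+(1-\nu)c_n$, with $\theta_n=\nabla_x\Phi(x_n,y_n)-\nabla_x\Phi(x_{n-1},y_{n-1})$, $\Phi_n^y=\Phi(x_n,y_{n-1})+\langle\nabla_y\Phi(x_n,y_{n-1}),y_n-y_{n-1}\rangle-\Phi(x_n,y_n)$, $r_n=\omega\delta_{n-1}\|x_n-x_{n-1}\|^2+\frac1\beta\|y_n-y_{n-1}\|^2$, $c_n=\frac{\eta}{|\mathcal I_n|}\sum_{i\in\mathcal I_n}r_i$, $\mathcal I_n=\{n-1,n-2,\dots,\max\{n-M,1\}\}$ (the $r_i$ for $i<n$ being the values from earlier iterations; for $n=1$, $\mathcal I_1=\emptyset$ and $c_1:=0$). (3) $\delta_n=\tau_n/\tau_{n-1}$. *)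

From HB Require Import structures.
From mathcomp Require Import all_boot all_order all_algebra.
From mathcomp Require Import all_classical all_reals ereal.
Set Implicit Arguments. Unset Strict Implicit. Unset Printing Implicit Defensive.
Import Order.TTheory GRing.Theory Num.Theory.
Local Open Scope classical_set_scope.
Local Open Scope ring_scope.

Section PDAcL.
Context {R : realType}.

Definition dotv {n} (u v : 'rV[R]_n) : R := \sum_(i < n) u 0 i * v 0 i.
Definition sqn {n} (u : 'rV[R]_n) : R := dotv u u.
Definition enorm {n} (u : 'rV[R]_n) : R := Num.sqrt (sqn u).

Definition edom {n} (h : 'rV[R]_n -> \bar R) : set 'rV[R]_n :=
  [set x | (h x < +oo)%E].

Definition proper_fun {n} (h : 'rV[R]_n -> \bar R) : Prop :=
  (forall x, h x != -oo%E) /\ (exists x, (h x < +oo)%E).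
Definition lsc_fun {n} (h : 'rV[R]_n -> \bar R) : Prop :=
  forall x (a : R), (a%:E < h x)%E ->
    exists2 d : R, 0 < d & forall u, enorm (u - x) < d -> (a%:E < h u)%E.
Definition convex_fun {n} (h : 'rV[R]_n -> \bar R) : Prop :=
  forall (x y : 'rV[R]_n) (t : R), 0 <= t <= 1 ->
    (h (t *: x + (1 - t) *: y)%R <= t%:E * h x + (1 - t)%:E * h y)%E.
Definition proper_closed_convex {n} (h : 'rV[R]_n -> \bar R) : Prop :=
  [/\ proper_fun h, lsc_fun h & convex_fun h].

Definition fconj {n} (f : 'rV[R]_n -> \bar R) : 'rV[R]_n -> \bar R :=
  fun y => ereal_sup [set ((dotv y u)%:E - f u)%E | u in [set: 'rV[R]_n]].

Definition subdiff {n} (h : 'rV[R]_n -> \bar R) (x v : 'rV[R]_n) : Prop :=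
  h x \is a fin_num /\ forall u, (h x + (dotv v (u - x)%R)%:E <= h u)%E.

Definition is_prox {n} (h : 'rV[R]_n -> \bar R) (lam : R) (z p : 'rV[R]_n) : Prop :=
  forall u, (h p + ((2 * lam)^-1 * sqn (p - z))%R%:E
             <= h u + ((2 * lam)^-1 * sqn (u - z))%R%:E)%E.

Definition is_grad {n} (F : 'rV[R]_n -> R) (x G : 'rV[R]_n) : Prop :=
  forall eps : R, 0 < eps -> exists2 d : R, 0 < d & forall h : 'rV[R]_n,
    enorm h < d -> `|F (x + h) - F x - dotv G h| <= eps * enorm h.

Definition bounded_set {n} (X : set 'rV[R]_n) : Prop :=
  exists B : R, forall x, X x -> enorm x <= B.

Variables (p q : nat).
Implicit Types (f : 'rV[R]_p -> \bar R) (g : 'rV[R]_q -> \bar R)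
  (Phi : 'rV[R]_q -> 'rV[R]_p -> R)
  (gx : 'rV[R]_q -> 'rV[R]_p -> 'rV[R]_q) (gy : 'rV[R]_q -> 'rV[R]_p -> 'rV[R]_p).

Definition Lag f g Phi (x : 'rV[R]_q) (y : 'rV[R]_p) : \bar R :=
  (g x + (Phi x y)%:E - fconj f y)%E.

(* the saddle-point set Omega; gx, gy are the partial gradients of Phi *)
Definition in_Omega f g gx gy (xs : 'rV[R]_q) (ys : 'rV[R]_p) : Prop :=
  [/\ edom g xs, edom (fconj f) ys,
      subdiff g xs (- gx xs ys) & subdiff (fconj f) ys (gy xs ys)].

Definition assumption_A1 f g Phi gx gy : Prop :=
  (exists xs ys, in_Omega f g gx gy xs ys) /\
  (forall xs ys, in_Omega f g gx gy xs ys -> Lag f g Phi xs ys \is a fin_num).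

Definition Phi_continuous f g Phi : Prop :=
  forall x y, edom g x -> edom (fconj f) y ->
  forall eps : R, 0 < eps -> exists2 d : R, 0 < d & forall x' y',
    edom g x' -> edom (fconj f) y' -> enorm (x' - x) < d -> enorm (y' - y) < d ->
    `|Phi x' y' - Phi x y| < eps.

Definition assumption_A2 f g Phi gx gy : Prop :=
  [/\ (forall y, edom (fconj f) y ->
        (forall x x' (t : R), edom g x -> edom g x' -> 0 <= t <= 1 ->
           Phi (t *: x + (1 - t) *: x') y <= t * Phi x y + (1 - t) * Phi x' y)
        /\ (forall x, edom g x -> is_grad (fun u => Phi u y) x (gx x y))),
      (forall x, edom g x ->
        (forall y y' (t : R), edom (fconj f) y -> edom (fconj f) y' -> 0 <= t <= 1 ->
           t * Phi x y + (1 - t) * Phi x y' <= Phi x (t *: y + (1 - t) *: y'))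
        /\ (forall y, edom (fconj f) y -> is_grad (fun v => Phi x v) y (gy x y)))
    & (forall (X : set 'rV[R]_q) (Y : set 'rV[R]_p), bounded_set X -> bounded_set Y ->
        exists Lyy Lxx Lxy : R, [/\ 0 <= Lyy, 0 <= Lxx, 0 < Lxy &
          forall x x' y y', X x -> edom g x -> X x' -> edom g x' ->
            Y y -> edom (fconj f) y -> Y y' -> edom (fconj f) y' ->
            enorm (gy x y - gy x y') <= Lyy * enorm (y - y') /\
            enorm (gx x y - gx x' y') <= Lxx * enorm (x - x') + Lxy * enorm (y - y')])].

Definition omega_of (psi xi varphi : R) : R :=
  2 * psi - xi - psi ^+ 3 * varphi / (1 + psi).

Definition pdacl_params (psi xi varphi taumax nu mu eta beta : R) (M : nat) : Prop :=
  [/\ 1 < psi /\ psi < 1 + Num.sqrt 3, 0 < xi, 1 < varphi,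
      0 < omega_of psi xi varphi & 0 < taumax] /\
  [/\ 0 < nu < 1, 0 < mu < 1, 0 <= eta < 1, (1 <= M)%N & 0 < beta].

(* r_i (i >= 1), with the final iterates *)
Definition r_seq (omega beta : R) (x : nat -> 'rV[R]_q) (y : nat -> 'rV[R]_p)
  (delta : nat -> R) (i : nat) : R :=
  omega * delta i.-1 * sqn (x i - x i.-1) + beta^-1 * sqn (y i - y i.-1).

Definition c_seq (eta : R) (M : nat) (r : nat -> R) (n : nat) : R :=
  let lo := maxn (n - M) 1 in
  let k := (n - lo)%N in
  if k == 0%N then 0 else eta / k%:R * \sum_(lo <= i < n) r i.

(* line-search test at iteration n >= 1 for a trial step t and trial point yt *)
Definition ls_cond Phi gx gy (omega xi nu beta eta : R) (M : nat)
  (x : nat -> 'rV[R]_q) (y : nat -> 'rV[R]_p) (tau delta : nat -> R)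
  (n : nat) (t : R) (yt : 'rV[R]_p) : Prop :=
  let theta := gx (x n) yt - gx (x n.-1) (y n.-1) in
  let Phiy := Phi (x n) (y n.-1) + dotv (gy (x n) (y n.-1)) (yt - y n.-1)
              - Phi (x n) yt in
  let r := omega * delta n.-1 * sqn (x n - x n.-1) + beta^-1 * sqn (yt - y n.-1) in
  t * tau n.-1 / xi * sqn theta + 2 * t * Phiy
    <= nu * r + (1 - nu) * c_seq eta M (r_seq omega beta x y delta) n.

Definition pdacl_iterates f g Phi gx gy
  (psi xi varphi taumax nu mu eta beta : R) (M : nat)
  (x z : nat -> 'rV[R]_q) (y : nat -> 'rV[R]_p) (tau delta : nat -> R)
  (idx : nat -> nat) : Prop :=
  let omega := omega_of psi xi varphi in
  let LS := ls_cond Phi gx gy omega xi nu beta eta M x y tau delta in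
  [/\ edom g (x 0%N), edom (fconj f) (y 0%N), 0 < tau 0%N <= taumax,
      z 0%N = x 0%N & delta 0%N = 1] /\
  (
      forall n : nat,
        let tb := Num.min (varphi * tau n) taumax in
        [/\ z n.+1 = ((psi - 1) / psi) *: x n + psi^-1 *: z n,
            is_prox g (tau n) (z n.+1 - tau n *: gx (x n) (y n)) (x n.+1)
          & tau n.+1 = tb * mu ^+ idx n.+1] /\
        [/\
            is_prox (fconj f) (beta * tau n.+1)
              (y n + (beta * tau n.+1) *: gy (x n.+1) (y n)) (y n.+1),
            LS n.+1 (tau n.+1) (y n.+1),
            (forall j : nat, (j < idx n.+1)%N -> forall y' : 'rV[R]_p,
               is_prox (fconj f) (beta * (tb * mu ^+ j))
                 (y n + (beta * (tb * mu ^+ j)) *: gy (x n.+1) (y n)) y' ->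
               ~ LS n.+1 (tb * mu ^+ j) y')
          & delta n.+1 = tau n.+1 / tau n]).

Definition a_seq (psi xi varphi beta : R) (xs : 'rV[R]_q) (ys : 'rV[R]_p)
  (x z : nat -> 'rV[R]_q) (y : nat -> 'rV[R]_p) (delta : nat -> R) (n : nat) : R :=
  psi / (psi - 1) * sqn (z n.+1 - xs) + beta^-1 * sqn (y n.-1 - ys)
  + omega_of psi xi varphi * delta n.-1 * sqn (x n - x n.-1).

Definition b_seq Phi gx gy (psi xi varphi beta : R)
  (x : nat -> 'rV[R]_q) (y : nat -> 'rV[R]_p) (tau delta : nat -> R) (n : nat) : R :=
  let theta := gx (x n) (y n) - gx (x n.-1) (y n.-1) in
  let Phiy := Phi (x n) (y n.-1) + dotv (gy (x n) (y n.-1)) (y n - y n.-1)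
              - Phi (x n) (y n) in
  - (tau n * tau n.-1 / xi * sqn theta) + beta^-1 * sqn (y n - y n.-1)
  + omega_of psi xi varphi * delta n.-1 * sqn (x n - x n.-1) - 2 * tau n * Phiy.

Definition Jgap f g Phi (xs : 'rV[R]_q) (ys : 'rV[R]_p) x y : \bar R :=
  (Lag f g Phi x ys - Lag f g Phi xs y)%E.

End PDAcL.

From HB Require Import structures.
From mathcomp Require Import all_boot all_order all_algebra.
From mathcomp Require Import all_classical all_reals ereal.
From mathcomp Require Import ring lra.
Set Implicit Arguments. Unset Strict Implicit. Unset Printing Implicit Defensive.
Import Order.TTheory GRing.Theory Num.Theory.
Local Open Scope ring_scope.

(* Each of the three proximal steps of PDAc-L is a variational inequality,
   obtained by testing the proximal minimisation on a segment.  The x-step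
   producing x_{n+1} is tested at x*, the previous one (producing x_n) at
   x_{n+1}, and the y-step at y*; convexity of Phi(., y_n) and concavity of
   Phi(x_n, .) supply two gradient inequalities.  With the weights
   2, 2 tau_n / tau_{n-1}, 2 / beta, 2 tau_n, 2 tau_n, these five inequalities
   add up to the claimed estimate, once the coupling term
   2 tau_n <theta_n, x_n - x_{n+1}> is split by Young's inequality and the
   terms coming from the extrapolation z_{n+1} = ((psi-1) x_n + z_n) / psi are
   controlled by a quadratic inequality in x_{n+1} - z_{n+1} and x_n - z_{n+1};
   that inequality is exactly where the value of omega comes from. *)

Section InnerProduct.
Context {R : realType} {n : nat}.
Implicit Types (u v w : 'rV[R]_n) (a t k : R).

Lemma dotvC u v : dotv u v = dotv v u.
Proof. by apply: eq_bigr => i _; rewrite mulrC. Qed.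

Lemma dotvDl u v w : dotv (u + v) w = dotv u w + dotv v w.
Proof. by rewrite /dotv -big_split; apply: eq_bigr => i _; rewrite !mxE mulrDl. Qed.

Lemma dotvZl a u w : dotv (a *: u) w = a * dotv u w.
Proof. by rewrite /dotv mulr_sumr; apply: eq_bigr => i _; rewrite !mxE mulrA. Qed.

Lemma dotvNl u w : dotv (- u) w = - dotv u w.
Proof. by rewrite -scaleN1r dotvZl mulN1r. Qed.

Lemma dotvDr u v w : dotv w (u + v) = dotv w u + dotv w v.
Proof. by rewrite dotvC dotvDl !(dotvC w). Qed.

Lemma dotvZr a u w : dotv w (a *: u) = a * dotv w u.
Proof. by rewrite dotvC dotvZl dotvC. Qed.

Lemma dotvNr u w : dotv w (- u) = - dotv w u.
Proof. by rewrite dotvC dotvNl dotvC. Qed.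

Lemma sqn_ge0 u : 0 <= sqn u.
Proof. by apply: sumr_ge0 => i _; rewrite -expr2 sqr_ge0. Qed.

Lemma sqnZ a u : sqn (a *: u) = a ^+ 2 * sqn u.
Proof. by rewrite /sqn dotvZl dotvZr mulrA expr2. Qed.

Lemma enorm_ge0 u : 0 <= enorm u.
Proof. exact: sqrtr_ge0. Qed.

Lemma enormZ a u : 0 <= a -> enorm (a *: u) = a * enorm u.
Proof.
by move=> a_ge0; rewrite /enorm sqnZ sqrtrM ?sqr_ge0 // sqrtr_sqr ger0_norm.
Qed.

Lemma sqnDZ u v t : sqn (u + t *: v) = sqn u + 2 * t * dotv u v + t ^+ 2 * sqn v.
Proof. by rewrite /sqn !(dotvDl, dotvDr, dotvZl, dotvZr) (dotvC v u); ring. Qed.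

Lemma sqnB u v : sqn (u - v) = sqn u - 2 * dotv u v + sqn v.
Proof. by rewrite -scaleN1r sqnDZ; ring. Qed.

Lemma dotv_young u v k : 0 < k -> 2 * dotv u v <= k * sqn u + k^-1 * sqn v.
Proof.
move=> k_gt0; have := sqn_ge0 (v + (- k) *: u).
rewrite sqnDZ (dotvC v u) => sq_ge0.
suff : 0 <= k * (k * sqn u + k^-1 * sqn v - 2 * dotv u v).
  by rewrite pmulr_rge0 //; lra.
have -> : k * (k * sqn u + k^-1 * sqn v - 2 * dotv u v)
  = sqn v + 2 * - k * dotv u v + (- k) ^+ 2 * sqn u by field; lra.
exact: sq_ge0.
Qed.

End InnerProduct.

Section ConvexAnalysis.
Context {R : realType} {n : nat}.
Implicit Types (h : 'rV[R]_n -> \bar R) (F : 'rV[R]_n -> R) (x y u w G : 'rV[R]_n).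

Lemma le0_of_forall_le_mul (A B : R) :
  0 <= B -> (forall t, 0 < t -> t <= 1 -> A <= t * B) -> A <= 0.
Proof.
move=> B_ge0 small; rewrite leNgt; apply/negP => A_gt0.
have den_gt0 : 0 < 2 * A + B by lra.
have t_gt0 : 0 < A / (2 * A + B) by rewrite divr_gt0.
have t_le1 : A / (2 * A + B) <= 1 by rewrite ler_pdivrMr // mul1r; lra.
have := small _ t_gt0 t_le1.
by rewrite mulrAC ler_pdivlMr //; nra.
Qed.

Lemma is_grad_convex_le F x x' G : is_grad F x G ->
  (forall t, 0 < t -> t < 1 ->
     F (t *: x' + (1 - t) *: x) <= t * F x' + (1 - t) * F x) ->
  dotv G (x' - x) <= F x' - F x.
Proof.
move=> gradG convF; have N_ge0 := enorm_ge0 (x' - x).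
set N := enorm (x' - x) in N_ge0 *.
suff : dotv G (x' - x) - (F x' - F x) <= 0 by lra.
apply: (le0_of_forall_le_mul N_ge0) => eps eps_gt0 _.
have [d d_gt0 taylor] := gradG eps eps_gt0.
set t := d / (2 * (N + d)).
have t_gt0 : 0 < t by rewrite divr_gt0 //; lra.
have t_lt1 : t < 1 by rewrite ltr_pdivrMr; lra.
have tN_lt_d : t * N < d by rewrite mulrAC ltr_pdivrMr; [nra | lra].
have segment : t *: x' + (1 - t) *: x = x + t *: (x' - x).
  by rewrite scalerBr scalerBl scale1r addrCA.
have := taylor (t *: (x' - x)); rewrite enormZ ?(ltW t_gt0) // => /(_ tN_lt_d).
rewrite dotvZr -segment -/N ler_norml => /andP[lower _].
have := convF t t_gt0 t_lt1 => upper.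
have : t * (dotv G (x' - x) - (F x' - F x) - eps * N) <= 0.
  by clear taylor convF; clearbody t N; lra.
by rewrite pmulr_rle0 //; lra.
Qed.

Lemma is_gradN F x G : is_grad F x G -> is_grad (fun v => - F v) x (- G).
Proof.
move=> gradG eps eps_gt0; have [d d_gt0 taylor] := gradG eps eps_gt0.
exists d => // v v_small; rewrite dotvNl.
have -> : - F (x + v) - - F x - - dotv G v = - (F (x + v) - F x - dotv G v) by ring.
by rewrite normrN; apply: taylor.
Qed.

Definition convex_fin h := forall x y t, 0 < t -> t <= 1 ->
  h x \is a fin_num -> h y \is a fin_num ->
  (h (t *: x + (1 - t) *: y)%R <= (t * fine (h x) + (1 - t) * fine (h y))%:E)%E.

Lemma convex_fun_fin h : convex_fun h -> convex_fin h.
Proof.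
move=> convh x y t t_gt0 t_le1 hx hy.
have := convh x y t; rewrite -(fineK hx) -(fineK hy) -!EFinM -EFinD !fineK //.
by apply; apply/andP; split; lra.
Qed.

Lemma fin_num_edom h x : h x \is a fin_num -> edom h x.
Proof. by rewrite fin_numElt => /andP[]. Qed.

Lemma edom_fin_num h x : (forall u, h u != -oo%E) -> edom h x -> h x \is a fin_num.
Proof. by move=> /(_ x) hx dx; rewrite fin_numElt dx andbT ltNye. Qed.

Lemma is_prox_fin h lam w pr u : (forall v, h v != -oo%E) ->
  is_prox h lam w pr -> h u \is a fin_num -> h pr \is a fin_num.
Proof.
move=> h_ninfty prox hu; have := prox u; rewrite -(fineK hu) -EFinD.
by case: (h pr) (h_ninfty pr).
Qed.

(* i.e. (w - pr) / lam is a subgradient of h at pr *)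
Lemma is_prox_vi h lam w pr u : 0 < lam -> (forall v, h v != -oo%E) ->
  convex_fin h -> is_prox h lam w pr -> h u \is a fin_num ->
  lam * (fine (h pr) - fine (h u)) <= dotv (pr - w) (u - pr).
Proof.
move=> lam_gt0 h_ninfty convh prox hu.
have hpr := is_prox_fin h_ninfty prox hu.
set s := sqn (u - pr); set d := dotv (pr - w) (u - pr).
have s_ge0 : 0 <= s by exact: sqn_ge0.
suff : lam * (fine (h pr) - fine (h u)) - d <= 0 by lra.
apply: (le0_of_forall_le_mul (B := s / 2)); first lra.
move=> t t_gt0 t_le1; have := prox (t *: u + (1 - t) *: pr).
have -> : t *: u + (1 - t) *: pr - w = (pr - w) + t *: (u - pr).
  by apply/rowP => i; rewrite !mxE; ring.
rewrite sqnDZ -/s -/d -(fineK hpr) => /le_trans /(_ (leeD2r _ (convh _ _ _ t_gt0 t_le1 hu hpr))).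
rewrite -!EFinD lee_fin => min_seg.
have : t * (fine (h pr) - fine (h u)) * (2 * lam) <= 2 * t * d + t ^+ 2 * s.
  by rewrite -ler_pdivlMr; lra.
rewrite expr2 => scaled.
have : t * (2 * (lam * (fine (h pr) - fine (h u)) - d) - t * s) <= 0 by lra.
by rewrite pmulr_rle0 //; lra.
Qed.

Lemma fconj_ge f y u : ((dotv y u)%:E - f u <= fconj f y)%E.
Proof. by apply: ereal_sup_ubound; exists u. Qed.

Lemma fconj_neq_ninfty f : proper_fun f -> forall y, fconj f y != -oo%E.
Proof.
case=> f_ninfty [u fu_lt] y.
have fu : f u \is a fin_num by rewrite fin_numElt fu_lt andbT ltNye.
by have := fconj_ge f y u; rewrite -(fineK fu) -EFinB; case: (fconj f y).
Qed.

Lemma fconj_convex_fin f : proper_fun f -> convex_fin (fconj f).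
Proof.
case=> f_ninfty _ x y t t_gt0 t_le1 fx fy.
apply: ge_ereal_sup => _ [u _ <-].
case fu: (f u) (f_ninfty u) => [r| |] // _; last by rewrite /= leNye.
have := fconj_ge f x u; rewrite fu -(fineK fx) -EFinB lee_fin => lex.
have := fconj_ge f y u; rewrite fu -(fineK fy) -EFinB lee_fin => ley.
rewrite -EFinB lee_fin dotvDl !dotvZl.
have := ler_wpM2l (ltW t_gt0) lex; have := ler_wpM2l (_ : 0 <= 1 - t) ley.
lra.
Qed.

End ConvexAnalysis.

Section SaddleFunction.
Context {R : realType} {p q : nat} (f : 'rV[R]_p -> \bar R) (g : 'rV[R]_q -> \bar R).
Variables (Phi : 'rV[R]_q -> 'rV[R]_p -> R).
Variables (gx : 'rV[R]_q -> 'rV[R]_p -> 'rV[R]_q) (gy : 'rV[R]_q -> 'rV[R]_p -> 'rV[R]_p).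
Hypothesis hA2 : assumption_A2 f g Phi gx gy.

Lemma Phi_grad_x_le x y u : edom g x -> edom (fconj f) y -> edom g u ->
  dotv (gx x y) (u - x) <= Phi u y - Phi x y.
Proof.
move=> gx_dom fy_dom gu_dom; case: hA2 => /(_ y fy_dom)[convPhi gradPhi] _ _.
apply: is_grad_convex_le (gradPhi x gx_dom) _ => t t_gt0 t_lt1.
by apply: convPhi => //; apply/andP; split; lra.
Qed.

Lemma Phi_grad_y_ge x y v : edom g x -> edom (fconj f) y -> edom (fconj f) v ->
  Phi x v <= Phi x y + dotv (gy x y) (v - y).
Proof.
move=> gx_dom fy_dom fv_dom; case: hA2 => _ /(_ x gx_dom)[concPhi gradPhi] _.
suff : dotv (- gy x y) (v - y) <= - Phi x v - - Phi x y by rewrite dotvNl; lra.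
apply: is_grad_convex_le (is_gradN (gradPhi y fy_dom)) _ => t t_gt0 t_lt1.
suff : t * Phi x v + (1 - t) * Phi x y <= Phi x (t *: v + (1 - t) *: y) by lra.
by apply: concPhi => //; apply/andP; split; lra.
Qed.

End SaddleFunction.

Lemma Jgap_fin {R : realType} p q (f : 'rV[R]_p -> \bar R) (g : 'rV[R]_q -> \bar R)
    (Phi : 'rV[R]_q -> 'rV[R]_p -> R) xs ys x y :
  g x \is a fin_num -> g xs \is a fin_num ->
  fconj f y \is a fin_num -> fconj f ys \is a fin_num ->
  Jgap f g Phi xs ys x y = (fine (g x) + Phi x ys - fine (fconj f ys)
                            - (fine (g xs) + Phi xs y - fine (fconj f y)))%:E.
Proof. by move=> *; rewrite /Jgap /Lag !(EFinB, EFinD) !fineK. Qed.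

Section OneStepEstimate.
Context {R : realType}.

(* This is where the constant psi^3 varphi / (1 + psi) in omega comes from. *)
Lemma extrapolation_le0 n (u v : 'rV[R]_n) psi varphi dl :
  0 < psi -> 0 < dl -> dl <= varphi ->
  - (1 + psi^-1) * sqn u + dl * psi * (sqn u - sqn v - sqn (u - v))
  + (2 * psi - psi ^+ 3 * varphi / (1 + psi)) * dl * sqn (u - v) <= 0.
Proof.
move=> psi_gt0 dl_gt0 dl_le; set K := psi ^+ 3 * varphi / (1 + psi).
have K_gt0 : 0 < K by rewrite divr_gt0 ?mulr_gt0 ?exprn_gt0 //; lra.
have square_ge0 := sqn_ge0 (v + ((psi - K) / K) *: u).
rewrite sqnDZ (dotvC v u) in square_ge0.
have u_ge0 := sqn_ge0 u; rewrite sqnB.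
set su := sqn u in square_ge0 u_ge0 *; set sv := sqn v in square_ge0 *.
set d := dotv u v in square_ge0 *.
have -> : - (1 + psi^-1) * su + dl * psi * (su - sv - (su - 2 * d + sv))
  + (2 * psi - K) * dl * (su - 2 * d + sv)
  = - (K * dl) * (sv + 2 * ((psi - K) / K) * d + ((psi - K) / K) ^+ 2 * su)
    - (psi ^+ 2 * (varphi - dl) / K) * su.
  by rewrite /K; field; apply/andP; split; lra.
have : 0 <= (psi ^+ 2 * (varphi - dl) / K) * su.
  by apply: mulr_ge0 => //; apply: divr_ge0; [apply: mulr_ge0; [exact: sqr_ge0 | lra] | lra].
have : 0 <= (K * dl) * (sv + 2 * ((psi - K) / K) * d + ((psi - K) / K) ^+ 2 * su).
  by apply: mulr_ge0; [apply: mulr_ge0 | ]; lra.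
lra.
Qed.

Lemma pdacl_one_step_estimate q p (x1 x2 z1 z2 z3 xs G0 G1 : 'rV[R]_q)
    (y0 y1 ys Gy : 'rV[R]_p)
    (psi xi varphi beta t0 t1 : R) {A : R} (g1 g2 gs f1 fs P1s Ps1 P10 P11 : R) :
  1 < psi -> 0 < xi -> 0 < beta -> 0 < t0 -> 0 < t1 -> t1 / t0 <= varphi ->
  z2 = ((psi - 1) / psi) *: x1 + psi^-1 *: z1 ->
  z3 = ((psi - 1) / psi) *: x2 + psi^-1 *: z2 ->
  t0 * (g1 - g2) <= dotv (x1 - (z1 - t0 *: G0)) (x2 - x1) ->
  t1 * (g2 - gs) <= dotv (x2 - (z2 - t1 *: G1)) (xs - x2) ->
  beta * t1 * (f1 - fs) <= dotv (y1 - (y0 + (beta * t1) *: Gy)) (ys - y1) ->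
  dotv G1 (xs - x1) <= Ps1 - P11 ->
  P1s <= P10 + dotv Gy (ys - y0) ->
  psi / (psi - 1) * sqn (z3 - xs) + beta^-1 * sqn (y1 - ys)
    + omega_of psi xi varphi * (t1 / t0) * sqn (x2 - x1)
    + 2 * t1 * (g1 + P1s - fs - (gs + Ps1 - f1))
  <= psi / (psi - 1) * sqn (z2 - xs) + beta^-1 * sqn (y0 - ys) + A
     - (- (t1 * t0 / xi * sqn (G1 - G0)) + beta^-1 * sqn (y1 - y0) + A
        - 2 * t1 * (P10 + dotv Gy (y1 - y0) - P11)).
Proof.
move=> psi_gt1 xi_gt0 beta_gt0 t0_gt0 t1_gt0 ratio_le z2E -> vi_x1 vi_x2 vi_y
  Phi_x Phi_y.
have psi_gt0 : 0 < psi by lra.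
have ratio_gt0 : 0 < t1 / t0 by rewrite divr_gt0.
have extrapolation := extrapolation_le0 (x2 - z2) (x1 - z2) psi_gt0 ratio_gt0 ratio_le.
have young := ler_wpM2l (ltW t1_gt0)
  (dotv_young (G1 - G0) (x1 - x2) (divr_gt0 t0_gt0 xi_gt0)).
set s_x1 := dotv (x1 - (z1 - t0 *: G0)) (x2 - x1) - t0 * (g1 - g2).
set s_x2 := dotv (x2 - (z2 - t1 *: G1)) (xs - x2) - t1 * (g2 - gs).
set s_y := dotv (y1 - (y0 + (beta * t1) *: Gy)) (ys - y1) - beta * t1 * (f1 - fs).
set s_Px := Ps1 - P11 - dotv G1 (xs - x1).
set s_Py := P10 + dotv Gy (ys - y0) - P1s.
have s_x1_ge0 : 0 <= (t1 / t0) * s_x1 by rewrite mulr_ge0 // /s_x1; lra.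
have s_y_ge0 : 0 <= beta^-1 * s_y by rewrite mulr_ge0 ?invr_ge0 /s_y; lra.
have s_Px_ge0 : 0 <= t1 * s_Px by rewrite mulr_ge0 /s_Px; lra.
have s_Py_ge0 : 0 <= t1 * s_Py by rewrite mulr_ge0 /s_Py; lra.
have s_x2_ge0 : 0 <= s_x2 by rewrite /s_x2; lra.
rewrite -subr_ge0; set gap := (X in 0 <= X).
have -> : gap = 2 * s_x2 + 2 * ((t1 / t0) * s_x1) + 2 * (beta^-1 * s_y)
    + 2 * (t1 * s_Px) + 2 * (t1 * s_Py)
    + (t1 * ((t0 / xi) * sqn (G1 - G0) + (t0 / xi)^-1 * sqn (x1 - x2))
       - t1 * (2 * dotv (G1 - G0) (x1 - x2)))
    - (- (1 + psi^-1) * sqn (x2 - z2) + t1 / t0 * psi * (sqn (x2 - z2)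
         - sqn (x1 - z2) - sqn (x2 - z2 - (x1 - z2)))
       + (2 * psi - psi ^+ 3 * varphi / (1 + psi)) * (t1 / t0)
         * sqn (x2 - z2 - (x1 - z2))).
  rewrite /gap /s_x1 /s_x2 /s_y /s_Px /s_Py z2E /omega_of /sqn.
  rewrite !(dotvDl, dotvDr, dotvNl, dotvNr, dotvZl, dotvZr).
  (* [field] does not know that dotv is symmetric: orient each product of atoms *)
  rewrite ?(dotvC z1 x1) ?(dotvC x2 x1) ?(dotvC xs x1) ?(dotvC G0 x1) ?(dotvC G1 x1).
  rewrite ?(dotvC x2 z1) ?(dotvC xs z1) ?(dotvC G0 z1) ?(dotvC G1 z1).
  rewrite ?(dotvC xs x2) ?(dotvC G0 x2) ?(dotvC G1 x2).
  rewrite ?(dotvC G0 xs) ?(dotvC G1 xs) ?(dotvC G1 G0).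
  rewrite ?(dotvC y1 y0) ?(dotvC ys y0) ?(dotvC Gy y0) ?(dotvC ys y1) ?(dotvC Gy y1).
  rewrite ?(dotvC Gy ys).
  by field; repeat (apply/andP; split); lra.
lra.
Qed.

End OneStepEstimate.

Section PDAcLIterates.
Context {R : realType} {p q : nat}.
Variables (f : 'rV[R]_p -> \bar R) (g : 'rV[R]_q -> \bar R).
Variables (Phi : 'rV[R]_q -> 'rV[R]_p -> R).
Variables (gx : 'rV[R]_q -> 'rV[R]_p -> 'rV[R]_q) (gy : 'rV[R]_q -> 'rV[R]_p -> 'rV[R]_p).
Variables (psi xi varphi taumax nu mu eta beta : R) (M : nat).
Variables (x z : nat -> 'rV[R]_q) (y : nat -> 'rV[R]_p) (tau delta : nat -> R).
Variable idx : nat -> nat.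
Hypothesis hpar : pdacl_params psi xi varphi taumax nu mu eta beta M.
Hypothesis hit : pdacl_iterates f g Phi gx gy psi xi varphi taumax nu mu eta beta M
  x z y tau delta idx.

Lemma pdacl_z_next n : z n.+1 = ((psi - 1) / psi) *: x n + psi^-1 *: z n.
Proof. by case: hit => _ /(_ n) /= [[]]. Qed.

Lemma pdacl_x_prox n : is_prox g (tau n) (z n.+1 - tau n *: gx (x n) (y n)) (x n.+1).
Proof. by case: hit => _ /(_ n) /= [[]]. Qed.

Lemma pdacl_tau_next n : tau n.+1 = Num.min (varphi * tau n) taumax * mu ^+ idx n.+1.
Proof. by case: hit => _ /(_ n) /= [[]]. Qed.

Lemma pdacl_y_prox n : is_prox (fconj f) (beta * tau n.+1)
  (y n + (beta * tau n.+1) *: gy (x n.+1) (y n)) (y n.+1).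
Proof. by case: hit => _ /(_ n) /= [_ []]. Qed.

Lemma pdacl_delta_next n : delta n.+1 = tau n.+1 / tau n.
Proof. by case: hit => _ /(_ n) /= [_ []]. Qed.

Lemma pdacl_tau_gt0 n : 0 < tau n.
Proof.
case: hpar => [[_ _ varphi_gt1 _ taumax_gt0] [_ /andP[mu_gt0 _] _ _ _]].
elim: n => [|n tau_gt0]; first by case: hit => [[_ _ /andP[]]].
rewrite pdacl_tau_next mulr_gt0 ?exprn_gt0 // lt_min taumax_gt0 andbT.
by rewrite mulr_gt0 //; lra.
Qed.

Lemma pdacl_tau_ratio_le n : tau n.+1 / tau n <= varphi.
Proof.
case: hpar => [[_ _ varphi_gt1 _ taumax_gt0] [_ /andP[mu_gt0 mu_lt1] _ _ _]].
have tau_gt0 := pdacl_tau_gt0 n.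
have min_ge0 : 0 <= Num.min (varphi * tau n) taumax.
  by rewrite le_min; apply/andP; split; nra.
rewrite ler_pdivrMr // pdacl_tau_next.
apply: (le_trans (ler_piMr min_ge0 _)); first by rewrite exprn_ile1 ?ltW.
by rewrite ge_min lexx.
Qed.

Hypotheses (hf : proper_closed_convex f) (hg : proper_closed_convex g).

Lemma pdacl_g_fin n : g (x n) \is a fin_num.
Proof.
case: hg => [[g_ninfty _] _ _]; case: hit => [[gx0 _ _ _ _] _].
case: n => [|n]; first exact: edom_fin_num.
exact: is_prox_fin g_ninfty (pdacl_x_prox n) (edom_fin_num g_ninfty gx0).
Qed.

Lemma pdacl_fconj_fin n : fconj f (y n) \is a fin_num.
Proof.
case: hf => [f_proper _ _]; have f_ninfty := fconj_neq_ninfty f_proper.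
case: hit => [[_ fy0 _ _ _] _].
case: n => [|n]; first exact: edom_fin_num.
exact: is_prox_fin f_ninfty (pdacl_y_prox n) (edom_fin_num f_ninfty fy0).
Qed.

Lemma pdacl_x_vi n u : g u \is a fin_num ->
  tau n * (fine (g (x n.+1)) - fine (g u))
    <= dotv (x n.+1 - (z n.+1 - tau n *: gx (x n) (y n))) (u - x n.+1).
Proof.
case: hg => [[g_ninfty _] _ g_convex].
exact: is_prox_vi (pdacl_tau_gt0 n) g_ninfty (convex_fun_fin g_convex) (pdacl_x_prox n).
Qed.

Lemma pdacl_y_vi n v : fconj f v \is a fin_num ->
  beta * tau n.+1 * (fine (fconj f (y n.+1)) - fine (fconj f v))
    <= dotv (y n.+1 - (y n + (beta * tau n.+1) *: gy (x n.+1) (y n))) (v - y n.+1).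
Proof.
case: hf => [f_proper _ _]; case: hpar => [_ [_ _ _ _ beta_gt0]].
apply: is_prox_vi (fconj_neq_ninfty f_proper) (fconj_convex_fin f_proper) (pdacl_y_prox n).
by rewrite mulr_gt0 ?pdacl_tau_gt0.
Qed.

End PDAcLIterates.

Theorem lemma3p2 (R : realType) (p q : nat)
  (f : 'rV[R]_p -> \bar R) (g : 'rV[R]_q -> \bar R)
  (Phi : 'rV[R]_q -> 'rV[R]_p -> R)
  (gx : 'rV[R]_q -> 'rV[R]_p -> 'rV[R]_q) (gy : 'rV[R]_q -> 'rV[R]_p -> 'rV[R]_p)
  (hf : proper_closed_convex f) (hg : proper_closed_convex g)
  (hPhi : Phi_continuous f g Phi)
  (hA1 : assumption_A1 f g Phi gx gy) (hA2 : assumption_A2 f g Phi gx gy)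
  (psi xi varphi taumax nu mu eta beta : R) (M : nat)
  (hpar : pdacl_params psi xi varphi taumax nu mu eta beta M)
  (x z : nat -> 'rV[R]_q) (y : nat -> 'rV[R]_p) (tau delta : nat -> R)
  (idx : nat -> nat)
  (hit : pdacl_iterates f g Phi gx gy psi xi varphi taumax nu mu eta beta M
           x z y tau delta idx)
  (xs : 'rV[R]_q) (ys : 'rV[R]_p) (hOm : in_Omega f g gx gy xs ys) :
  forall n : nat, (1 <= n)%N ->
    ((a_seq psi xi varphi beta xs ys x z y delta n.+1)%:E
       + (2 * tau n)%:E * Jgap f g Phi xs ys (x n) (y n)
     <= (a_seq psi xi varphi beta xs ys x z y delta n
         - b_seq Phi gx gy psi xi varphi beta x y tau delta n)%:E)%E.
Proof.
case: (hpar) => [[[psi_gt1 _] xi_gt0 _ _ _] [_ _ _ _ beta_gt0]].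
case: hOm => xs_dom ys_dom [gxs _] [fys _].
have g_fin := pdacl_g_fin hit hg; have f_fin := pdacl_fconj_fin hit hf.
case=> [//|n] _.
rewrite (Jgap_fin Phi (g_fin _) gxs (f_fin _) fys) -EFinM -EFinD lee_fin.
rewrite /a_seq /b_seq /= (pdacl_delta_next hit).
apply: (pdacl_one_step_estimate psi_gt1 xi_gt0 beta_gt0
  (pdacl_tau_gt0 hpar hit n) (pdacl_tau_gt0 hpar hit n.+1)
  (pdacl_tau_ratio_le hpar hit n) (pdacl_z_next hit n.+1) (pdacl_z_next hit n.+2)).
- exact: pdacl_x_vi hpar hit hg n (x n.+2) (g_fin n.+2).
- exact: pdacl_x_vi hpar hit hg n.+1 xs gxs.
- exact: pdacl_y_vi hpar hit hf n ys fys.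
- exact: (Phi_grad_x_le hA2 (fin_num_edom (g_fin n.+1)) (fin_num_edom (f_fin n.+1)) xs_dom).
- exact: (Phi_grad_y_ge hA2 (fin_num_edom (g_fin n.+1)) (fin_num_edom (f_fin n)) ys_dom).
Qed.
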